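(* Let $(\beta(\cdot),\gamma(\cdot))$ be the bribing and requesting functions of any pure-strategy separating weak perfect Bayesian equilibrium of the double-option game, and let $\pi(v_1;\beta,\gamma)$ be the interim expected payoff of type $v_1$ of bidder 1 in that equilibrium. Then $\pi(v_1)\ge\pi(v_1;\beta,\gamma)$ for every $v_1\in[\underline v_1,\bar v_1]$, where $\pi(v_1)$ is type $v_1$'s interim payoff in the equilibrium $E^*$.
   Context: Setting: two risk-neutral bidders; bidder $i$'s private valuation $v_i$ is independently distributed with cdf $F_i$ on $[\underline v_i,\bar v_i]$, $0\le\underline v_i<\bar v_i<\infty$, continuous density $0<f_i<\infty$ there; $F_2$ is extended by $0$ below $\underline v_2$ and $1$ above $\bar v_2$; $\underline v_1<\bar v_2$. Double-option game: bidder 1 learns $v_1$ and proposes $(b,r)$, $b,r\ge0$; bidder 2 learns $v_2$ and accepts the bribe (payoffs $(v_1-b,b)$), accepts the request (payoffs $(r,v_2-r)$), or rejects and both bid truthfully in a second-price auction with no reserve (payoffs $((v_1-v_2)^+,(v_2-v_1)^+)$). In a weak perfect Bayesian equilibrium bidder 2 forms beliefs by Bayes' rule on path and best-responds; when indifferent between accepting and rejecting she accepts, and when indifferent between the two options she accepts the bribe. A pure-strategy equilibrium is separating if $v_1\mapsto(\beta(v_1),\gamma(v_1))$ is injective. Equilibrium $E^*$: $b$ solves $b'(v_1)=\frac{1}{f_2(b(v_1)+v_1)b(v_1)+F_2(b(v_1)+v_1)}-1$, $b(\underline v_1)=0$, up to $v^1$ (the smallest $v_1$ with $b(v_1)+v_1=\bar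 v_2$, or $\bar v_1$ if none), and $b(v_1)=b(v^1)$ beyond; type $v_1$ proposes $(b(v_1),v_1)$ and bidder 2 accepts the bribe iff $v_2\le b(v_1)+v_1$, otherwise accepts the request; thus $\pi(v_1)=v_1-F_2(b(v_1)+v_1)b(v_1)$. *)

From Stdlib Require Import Reals Lra ClassicalEpsilon.
Open Scope R_scope.

(** Total Riemann integral: the Stdlib Riemann integral when f is Riemann
    integrable on [a,b] (value independent of the integrability proof),
    and 0 otherwise.  All integrands used below are Riemann integrable. *)
Definition RInt (f : R -> R) (a b : R) : R :=
  match excluded_middle_informative (inhabited (Riemann_integrable f a b)) with
  | left H =>
      RiemannInt (proj1_sig (constructive_indefinite_description
                   (fun _ : Riemann_integrable f a b => True)
                   (match H with inhabits pr => ex_intro _ pr I end)))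
  | right _ => 0
  end.

Definition has_density (lo hi : R) (F f : R -> R) : Prop :=
  (forall x, x <= lo -> F x = 0) /\
  (forall x, hi <= x -> F x = 1) /\
  continuity F /\
  (forall x, lo < x < hi -> derivable_pt_lim F x (f x)) /\
  (forall x, lo <= x <= hi -> continue_in f (fun y => lo <= y <= hi) x) /\
  (forall x, lo <= x <= hi -> 0 < f x) /\
  (forall x, x < lo \/ hi < x -> f x = 0).

(** A belief of bidder 2 about v1: an arbitrary probability distribution on
    [lo,hi], represented by its cdf G (nondecreasing, right-continuous,
    0 below lo, 1 from hi on). *)
Definition is_belief_cdf (lo hi : R) (G : R -> R) : Prop :=
  (forall x y, x <= y -> G x <= G y) /\
  (forall x, x < lo -> G x = 0) /\
  (forall x, hi <= x -> G x = 1) /\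
  (forall x, continue_in G (fun y => x <= y) x).

Definition point_cdf (v : R) : R -> R := fun x => if Rle_dec v x then 1 else 0.

(** Bidder 2's expected payoff from rejecting, E_G[(v2 - v1)^+],
    written as the integral of the cdf: int_{lo}^{v2} G(t) dt. *)
Definition reject_payoff (lo : R) (G : R -> R) (v2 : R) : R :=
  if Rle_dec lo v2 then RInt G lo v2 else 0.

Inductive action := Bribe | Request | Reject.

(** Bidder 2's best response to (b,r) given her reject payoff J, with the
    tie-breaking: accept when indifferent between accepting and rejecting,
    accept the bribe when indifferent between the two options. *)
Definition resp (b r v2 J : R) : action :=
  if Rle_dec (v2 - r) b then
    (if Rle_dec J b then Bribe
     else if Rle_dec J (v2 - r) then Request else Reject)
  else if Rle_dec J (v2 - r) then Request else Reject.

Definition u1 (v1 b r v2 : R) (a : action) : R :=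
  match a with
  | Bribe => v1 - b
  | Request => r
  | Reject => Rmax 0 (v1 - v2)
  end.

Definition interim1 (lo1 lo2 hi2 : R) (f2 : R -> R)
    (v1 b r : R) (G : R -> R) : R :=
  RInt (fun v2 => u1 v1 b r v2 (resp b r v2 (reject_payoff lo1 G v2)) * f2 v2)
       lo2 hi2.

(** Pure-strategy separating weak PBE: bribing function beta, requesting
    function gamma, and bidder 2's belief system mu (a belief cdf for each
    proposal (b,r)); bidder 2's strategy is her (tie-broken) best response. *)
Definition separating_wPBE (lo1 hi1 lo2 hi2 : R) (f2 : R -> R)
    (beta gamma : R -> R) (mu : R -> R -> (R -> R)) : Prop :=
  (forall v, lo1 <= v <= hi1 -> 0 <= beta v /\ 0 <= gamma v) /\
  (forall v w, lo1 <= v <= hi1 -> lo1 <= w <= hi1 ->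
      beta v = beta w -> gamma v = gamma w -> v = w) /\
  (forall b r, is_belief_cdf lo1 hi1 (mu b r)) /\
  (forall v, lo1 <= v <= hi1 -> forall x, mu (beta v) (gamma v) x = point_cdf v x) /\
  (forall v, lo1 <= v <= hi1 -> forall b r, 0 <= b -> 0 <= r ->
      interim1 lo1 lo2 hi2 f2 v b r (mu b r)
      <= interim1 lo1 lo2 hi2 f2 v (beta v) (gamma v) (mu (beta v) (gamma v))).

Definition eq_payoff (lo1 lo2 hi2 : R) (f2 : R -> R)
    (beta gamma : R -> R) (mu : R -> R -> (R -> R)) (v1 : R) : R :=
  interim1 lo1 lo2 hi2 f2 v1 (beta v1) (gamma v1) (mu (beta v1) (gamma v1)).

Definition Estar_bribe (lo1 hi1 hi2 : R) (F2 f2 : R -> R) (b : R -> R) : Prop :=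
  exists vh, lo1 <= vh <= hi1 /\
    b lo1 = 0 /\
    (forall v, lo1 <= v <= vh -> continue_in b (fun y => lo1 <= y <= vh) v) /\
    (forall v, lo1 < v < vh ->
        derivable_pt_lim b v (1 / (f2 (b v + v) * b v + F2 (b v + v)) - 1)) /\
    ((b vh + vh = hi2 /\ forall v, lo1 <= v < vh -> b v + v <> hi2) \/
     (vh = hi1 /\ forall v, lo1 <= v <= hi1 -> b v + v <> hi2)) /\
    (forall v, vh < v <= hi1 -> b v = b vh).

Definition Estar_payoff (F2 : R -> R) (b : R -> R) (v1 : R) : R :=
  v1 - F2 (b v1 + v1) * b v1.

From Pilot Require Import Defs.
From Stdlib Require Import Reals Lra Psatz FunctionalExtensionality Classical ClassicalEpsilon.
From Coquelicot Require Import Coquelicot.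
Open Scope R_scope.

(* In a separating equilibrium bidder 2 learns v1 on path, so type v receives
   (v - beta) F2(K) + C (1 - F2(K)), where K is the cutoff below which she takes the
   bribe. Mimicking a higher type t costs type w exactly (t - w) F2(K(t)), so
   incentive compatibility bounds the left increments of the equilibrium payoff U
   by F2(K(t)) <= 1. Wherever U exceeds the E* payoff V(v) = v - F2(b(v) + v) b(v),
   the bound U(t) <= t - (K(t) - t) F2(K(t)) forces K(t) <= b(t) + t, while the ODE
   for b makes V' = F2(b + v). Since U(lo1) <= lo1 = V(lo1), a comparison argument
   for functions with one-sided slope bounds gives U <= V up to v^1; beyond v^1,
   V grows with slope 1 and U with slope at most 1. *)

Lemma Defs_RInt_unique f a b l : is_RInt f a b l -> Defs.RInt f a b = l.
Proof.
  intros H.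
  assert (pr : Riemann_integrable f a b) by (apply ex_RInt_Reals_0; exists l; exact H).
  unfold Defs.RInt. destruct excluded_middle_informative as [Hi | Hn].
  - rewrite <- RInt_Reals. apply is_RInt_unique, H.
  - exfalso. apply Hn. constructor. exact pr.
Qed.

Definition clamp (lo hi x : R) : R := Rmax lo (Rmin hi x).

Lemma clamp_in lo hi x : lo <= hi -> lo <= clamp lo hi x <= hi.
Proof. intros. unfold clamp, Rmax, Rmin. repeat destruct Rle_dec; lra. Qed.

Lemma clamp_id lo hi x : lo <= x <= hi -> clamp lo hi x = x.
Proof. intros. unfold clamp, Rmax, Rmin. repeat destruct Rle_dec; lra. Qed.

Lemma Rabs_clamp_sub_le lo hi x y :
  lo <= hi -> Rabs (clamp lo hi x - clamp lo hi y) <= Rabs (x - y).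
Proof. intros. unfold clamp, Rmax, Rmin. repeat destruct Rle_dec; split_Rabs; lra. Qed.

Lemma continue_in_ball (g : R -> R) D x eps :
  continue_in g D x -> 0 < eps ->
  exists d, 0 < d /\ forall y, D y -> Rabs (y - x) < d -> Rabs (g y - g x) < eps.
Proof.
  intros Hg Heps. destruct (Hg eps Heps) as [d [Hd H]].
  exists d. split; [exact Hd |]. intros y Dy Hy.
  destruct (Req_dec y x) as [-> | Hne].
  - rewrite Rminus_diag, Rabs_R0. exact Heps.
  - apply (H y). split; [split; auto | exact Hy].
Qed.

Lemma continue_in_comp (g h : R -> R) D x :
  continue_in h D x -> continuity_pt g (h x) -> continue_in (fun y => g (h y)) D x.
Proof.
  intros Hh Hg eps Heps.
  destruct (continue_in_ball g no_cond (h x) eps Hg Heps) as [a [Ha Hga]].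
  destruct (continue_in_ball h D x a Hh Ha) as [d [Hd Hhd]].
  exists d. split; [exact Hd |]. intros y [[Dy _] Hy].
  apply Hga; [exact I | apply Hhd; auto].
Qed.

(** * Distributions with a continuous density *)

Section Density.
Variables (lo hi : R) (F f : R -> R).
Hypotheses (Hlohi : lo < hi) (HF : has_density lo hi F f).

Lemma F_clamp x : F x = F (clamp lo hi x).
Proof.
  destruct HF as (Flo & Fhi & _).
  destruct (Rle_dec x lo) as [Hx | Hx]; [| destruct (Rle_dec hi x) as [Hx' | Hx']].
  - rewrite Flo, Flo; auto. unfold clamp, Rmax, Rmin. repeat destruct Rle_dec; lra.
  - rewrite Fhi, Fhi; auto. unfold clamp, Rmax, Rmin. repeat destruct Rle_dec; lra.
  - rewrite clamp_id; lra.
Qed.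

Lemma F_le_in x y : lo <= x -> x <= y -> y <= hi -> F x <= F y.
Proof.
  intros Hx Hxy Hy. destruct HF as (_ & _ & Fcont & Fder & _ & fpos & _).
  destruct (Req_dec x y) as [<- | Hne]; [lra |].
  destruct (MVT_gen F x y f) as [c [Hc HFc]].
  - intros z Hz. rewrite Rmin_left, Rmax_right in Hz by lra.
    apply is_derive_Reals, Fder. lra.
  - intros z _. apply Fcont.
  - rewrite Rmin_left, Rmax_right in Hc by lra.
    assert (0 < f c) by (apply fpos; lra). nra.
Qed.

Lemma F_le x y : x <= y -> F x <= F y.
Proof.
  intros Hxy. rewrite (F_clamp x), (F_clamp y).
  pose proof (clamp_in lo hi x). pose proof (clamp_in lo hi y).
  apply F_le_in; try lra. unfold clamp, Rmax, Rmin. repeat destruct Rle_dec; lra.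
Qed.

Lemma F_bounds x : 0 <= F x <= 1.
Proof.
  destruct HF as (Flo & Fhi & _). split.
  - rewrite <- (Flo (Rmin x lo)) by apply Rmin_r. apply F_le, Rmin_l.
  - rewrite <- (Fhi (Rmax x hi)) by apply Rmax_r. apply F_le, Rmax_l.
Qed.

Lemma f_ge0 x : 0 <= f x.
Proof.
  destruct HF as (_ & _ & _ & _ & _ & fpos & fout).
  destruct (Rlt_dec x lo); [rewrite fout; lra |].
  destruct (Rlt_dec hi x); [rewrite fout; lra |].
  apply Rlt_le, fpos. lra.
Qed.

Lemma F_derivable x : x <> lo -> x <> hi -> derivable_pt_lim F x (f x).
Proof.
  intros Hlo Hhi. destruct HF as (Flo & Fhi & _ & Fder & _ & _ & fout).
  assert (Hconst : forall c d, 0 < d -> (forall y, Rabs (y - x) < d -> F y = c) ->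
                     derivable_pt_lim F x 0).
  { intros c d Hd Hc eps Heps. exists (mkposreal d Hd). intros h Hh0 Hh. simpl in Hh.
    assert (Hx : F x = c) by (apply Hc; rewrite Rminus_diag, Rabs_R0; exact Hd).
    assert (Hxh : F (x + h) = c) by (apply Hc; replace (x + h - x) with h by ring; exact Hh).
    rewrite Hx, Hxh, Rminus_diag, Rdiv_0_l, Rminus_diag, Rabs_R0. exact Heps. }
  destruct (Rlt_dec x lo); [| destruct (Rlt_dec hi x)].
  - rewrite fout by lra. apply (Hconst 0 (lo - x)); [lra |].
    intros y Hy. apply Flo. split_Rabs; lra.
  - rewrite fout by lra. apply (Hconst 1 (x - hi)); [lra |].
    intros y Hy. apply Fhi. split_Rabs; lra.
  - apply Fder. lra.
Qed.

Lemma f_clamp_continuous x : continuous (fun y => f (clamp lo hi y)) x.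
Proof.
  destruct HF as (_ & _ & _ & _ & fcont & _).
  apply continuity_pt_filterlim. intros eps Heps.
  pose proof (clamp_in lo hi x (Rlt_le _ _ Hlohi)) as Hx.
  destruct (continue_in_ball f _ _ eps (fcont _ Hx) Heps) as [d [Hd Hfd]].
  exists d. split; [exact Hd |]. intros y [_ Hy]. simpl in *. unfold R_dist in *.
  apply Hfd; [apply clamp_in; lra |].
  eapply Rle_lt_trans; [apply Rabs_clamp_sub_le; lra | exact Hy].
Qed.

Lemma is_RInt_density a b : lo <= a -> a <= b -> b <= hi -> is_RInt f a b (F b - F a).
Proof.
  intros Ha Hab Hb. destruct HF as (_ & _ & Fcont & Fder & _).
  (* [f] may jump at [lo] and [hi]; work with its continuous extension [g]. *)
  set (g := fun y => f (clamp lo hi y)).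
  set (Phi := fun y => RInt g a y).
  assert (Hg : forall a' b', ex_RInt g a' b').
  { intros. apply (@ex_RInt_continuous R_CompleteNormedModule). intros; apply f_clamp_continuous. }
  assert (HPhi : forall y, is_derive Phi y (g y)).
  { intros y. apply is_derive_RInt with a; [| apply f_clamp_continuous].
    apply filter_forall. intros z. apply (@RInt_correct R_CompleteNormedModule), Hg. }
  assert (HPhib : Phi b - F b = Phi a - F a).
  { destruct (Req_dec a b) as [<- | Hne]; [reflexivity |].
    destruct (MVT_gen (fun y => Phi y - F y) a b (fun _ => 0)) as [c [_ Hc]].
    - intros y Hy. rewrite Rmin_left, Rmax_right in Hy by lra.
      apply is_derive_Reals. replace 0 with (g y - f y) by (unfold g; rewrite clamp_id; lra).
      apply derivable_pt_lim_minus; [apply is_derive_Reals, HPhi | apply Fder; lra].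
    - intros y _. apply continuity_pt_minus; [| apply Fcont].
      apply continuity_pt_filterlim, (@ex_derive_continuous R_AbsRing R_NormedModule).
      eexists. apply HPhi.
    - lra. }
  assert (HPhia : Phi a = 0) by exact (RInt_point a g).
  apply (@is_RInt_ext R_NormedModule) with g.
  - intros x Hx. rewrite Rmin_left, Rmax_right in Hx by lra. unfold g. rewrite clamp_id; lra.
  - replace (F b - F a) with (Phi b) by lra. apply (@RInt_correct R_CompleteNormedModule), Hg.
Qed.

Lemma is_RInt_density_step A C k :
  is_RInt (fun x => f x * (if Rle_dec x k then A else C)) lo hi (A * F k + C * (1 - F k)).
Proof.
  destruct HF as (Flo & Fhi & _).
  set (k' := clamp lo hi k).
  assert (Hk : lo <= k' <= hi) by (apply clamp_in; lra).
  set (step := fun x => f x * (if Rle_dec x k then A else C)).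
  assert (Hlow : is_RInt step lo k' (scal A (F k' - F lo))).
  { apply (@is_RInt_ext R_NormedModule) with (fun x => scal A (f x)).
    - intros x Hx. rewrite Rmin_left, Rmax_right in Hx by lra. unfold step.
      destruct Rle_dec as [_ | Hn]; [apply Rmult_comm |].
      exfalso. apply Hn. unfold k', clamp, Rmax, Rmin in Hx. repeat destruct Rle_dec; lra.
    - apply (@is_RInt_scal R_NormedModule), is_RInt_density; lra. }
  assert (Hhigh : is_RInt step k' hi (scal C (F hi - F k'))).
  { apply (@is_RInt_ext R_NormedModule) with (fun x => scal C (f x)).
    - intros x Hx. rewrite Rmin_left, Rmax_right in Hx by lra. unfold step.
      destruct Rle_dec as [Hl | _]; [| apply Rmult_comm].
      exfalso. unfold k', clamp, Rmax, Rmin in Hx. repeat destruct Rle_dec; lra.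
    - apply (@is_RInt_scal R_NormedModule), is_RInt_density; lra. }
  replace (A * F k + C * (1 - F k)) with (plus (scal A (F k' - F lo)) (scal C (F hi - F k'))).
  - exact (is_RInt_Chasles _ _ _ _ _ _ Hlow Hhigh).
  - unfold k'. rewrite <- F_clamp, (Flo lo), (Fhi hi) by lra.
    unfold plus, scal; simpl; unfold mult; simpl. ring.
Qed.

End Density.

Lemma lt_of_weighted_cdf_lt (F : R -> R) t k m :
  (forall x y, x <= y -> F x <= F y) -> (forall x, 0 <= F x) ->
  t <= m -> (k - t) * F k < (m - t) * F m -> k < m.
Proof.
  intros Hmono Hpos Htm Hlt. destruct (Rlt_le_dec k m) as [| Hmk]; [assumption |].
  exfalso. pose proof (Hmono _ _ Hmk). pose proof (Hpos m). nra.
Qed.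

(** * Comparison under one-sided slope bounds *)

Lemma last_point_below (phi : R -> R) a c :
  a <= c -> phi a < phi c ->
  (forall t, a <= t < c -> forall eta, 0 < eta ->
     exists d, 0 < d /\ forall s, t < s < t + d -> phi s < phi t + eta) ->
  exists t, a < t <= c /\ phi c <= phi t /\
    forall d, 0 < d -> exists s, a <= s < t /\ t - d < s /\ phi s < phi c.
Proof.
  intros Hac Hlt Husc.
  (* [t] is the supremum of the points where [phi] is below [phi c]. *)
  set (A := fun s => a <= s <= c /\ phi s < phi c).
  destruct (completeness A) as [t [Hub Hlub]].
  - exists c. intros s [Hs _]. lra.
  - exists a. split; [lra | exact Hlt].
  assert (Hat : a <= t) by (apply Hub; split; [lra | exact Hlt]).
  assert (Htc : t <= c) by (apply Hlub; intros s [Hs _]; lra).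
  assert (Hrec : phi c <= phi t).
  { destruct (Rle_lt_dec (phi c) (phi t)) as [| Hpt]; [assumption |]. exfalso.
    destruct (Req_dec t c) as [-> | Hne]; [lra |].
    destruct (Husc t ltac:(lra) (phi c - phi t) ltac:(lra)) as [d [Hd Hs]].
    set (s := t + Rmin d (c - t) / 2).
    assert (Hmin : 0 < Rmin d (c - t) <= c - t) by (split; [apply Rmin_glb_lt | apply Rmin_r]; lra).
    assert (Hsd : Rmin d (c - t) <= d) by apply Rmin_l.
    assert (As : A s).
    { split; [unfold s; lra |]. specialize (Hs s ltac:(unfold s; lra)). lra. }
    pose proof (Hub s As). unfold s in *. lra. }
  assert (Hat' : a < t) by (destruct (Req_dec a t) as [<- | ]; lra).
  exists t. split; [lra |]. split; [exact Hrec |].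
  intros d Hd. apply NNPP. intros Hnone.
  assert (t <= t - d); [| lra].
  apply Hlub. intros s [Hs Hps]. apply Rnot_lt_le. intros Hsd.
  apply Hnone. exists s. split; [| split]; try lra.
  split; [lra |]. destruct (Req_dec s t) as [-> | ]; [lra |].
  assert (s <= t) by (apply Hub; split; auto). lra.
Qed.

Section Comparison.
Variables (U V : R -> R) (a c : R).
Hypotheses
  (HV : forall t, a <= t <= c -> continue_in V (fun y => a <= y <= c) t)
  (HU : forall w t, a <= w -> w <= t -> t <= c -> U t - U w <= t - w).

Lemma le_at_right_end :
  a < c -> (forall x, a <= x < c -> U x <= V x) -> U c <= V c.
Proof.
  intros Hac Hle. apply Rnot_lt_le. intros Hgt.
  set (g := U c - V c).
  destruct (continue_in_ball V _ c (g / 2) (HV c ltac:(lra)) ltac:(unfold g; lra))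
    as [d [Hd Hcont]].
  set (m := Rmin d (Rmin (c - a) g) / 2).
  assert (Hm : 0 < Rmin d (Rmin (c - a) g)) by (repeat apply Rmin_glb_lt; unfold g; lra).
  assert (Hmd : Rmin d (Rmin (c - a) g) <= d) by apply Rmin_l.
  assert (Hmca : Rmin d (Rmin (c - a) g) <= c - a)
    by (eapply Rle_trans; [apply Rmin_r | apply Rmin_l]).
  assert (Hmg : Rmin d (Rmin (c - a) g) <= g) by (eapply Rle_trans; [apply Rmin_r | apply Rmin_r]).
  assert (HVm : Rabs (V (c - m) - V c) < g / 2).
  { apply Hcont; [unfold m; lra |]. rewrite Rabs_left; unfold m; lra. }
  apply Rabs_def2 in HVm.
  pose proof (HU (c - m) c ltac:(unfold m; lra) ltac:(unfold m; lra) ltac:(lra)).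
  pose proof (Hle (c - m) ltac:(unfold m; lra)).
  unfold m, g in *. lra.
Qed.

Hypothesis HD : forall t, a < t < c -> V t < U t ->
  exists d, derivable_pt_lim V t d /\ forall w, a <= w <= t -> U t - U w <= (t - w) * d.

Lemma le_before_right_end : U a <= V a -> forall x, a <= x < c -> U x <= V x.
Proof.
  intros Ha x Hx. apply Rnot_lt_le. intros Hgt.
  (* Tilting [U - V] by [eps] makes the last point below its value at [x] a point
     where [U > V], approached from the left by points the slope bound forbids. *)
  assert (Hax : a < x) by (destruct (Req_dec a x) as [<- | ]; lra).
  set (eps := (U x - V x) / (2 * (x - a))).
  assert (Heps : 0 < eps) by (unfold eps; apply Rdiv_lt_0_compat; lra).
  assert (Hgap : eps * (x - a) = (U x - V x) / 2) by (unfold eps; field; lra).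
  set (phi := fun s => U s - V s - eps * s).
  destruct (last_point_below phi a x) as (t & Ht & Hrec & Happroach).
  - lra.
  - unfold phi. lra.
  - intros t Ht eta Heta.
    destruct (continue_in_ball V _ t (eta / 2) (HV t ltac:(lra)) ltac:(lra)) as [d [Hd Hcont]].
    exists (Rmin d (Rmin (eta / 2) (c - t))).
    split; [repeat apply Rmin_glb_lt; lra |]. intros s Hs.
    assert (Hsd : s - t < d) by (pose proof (Rmin_l d (Rmin (eta / 2) (c - t))); lra).
    assert (Hse : s - t < eta / 2).
    { pose proof (Rmin_r d (Rmin (eta / 2) (c - t))). pose proof (Rmin_l (eta / 2) (c - t)). lra. }
    assert (Hsc : s <= c).
    { pose proof (Rmin_r d (Rmin (eta / 2) (c - t))). pose proof (Rmin_r (eta / 2) (c - t)). lra. }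
    assert (HVs : Rabs (V s - V t) < eta / 2) by (apply Hcont; [lra | rewrite Rabs_right; lra]).
    apply Rabs_def2 in HVs.
    pose proof (HU t s ltac:(lra) ltac:(lra) Hsc).
    assert (0 <= eps * (s - t)) by (apply Rmult_le_pos; lra).
    unfold phi. lra.
  - assert (Hshift : eps * (x - t) <= eps * (x - a)) by (apply Rmult_le_compat_l; lra).
    assert (HVU : V t < U t) by (unfold phi in Hrec; lra).
    destruct (HD t ltac:(lra) HVU) as [d [Hder HIC]].
    destruct (Hder eps Heps) as [del Hdel].
    destruct (Happroach del (cond_pos del)) as (s & Hs & Hsd & Hps).
    specialize (Hdel (s - t) ltac:(lra) ltac:(rewrite Rabs_left; lra)).
    replace (t + (s - t)) with s in Hdel by ring.
    apply Rabs_def2 in Hdel.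
    set (q := (V s - V t) / (s - t)) in Hdel.
    assert (Hq : V t - V s = q * (t - s)) by (unfold q; field; lra).
    assert (q * (t - s) > (d - eps) * (t - s)) by (apply Rmult_gt_compat_r; lra).
    pose proof (HIC s ltac:(lra)).
    unfold phi in Hrec, Hps. lra.
Qed.

Lemma le_on_interval : U a <= V a -> forall x, a <= x <= c -> U x <= V x.
Proof.
  intros Ha x Hx. destruct (Rlt_le_dec x c) as [Hxc | Hcx].
  - apply le_before_right_end; [exact Ha | lra].
  - replace x with c by lra. destruct (Req_dec a c) as [<- | Hne]; [exact Ha |].
    apply le_at_right_end; [lra |]. apply le_before_right_end, Ha.
Qed.

End Comparison.

Lemma continue_in_Estar_payoff (F b : R -> R) D t :
  continuity F -> continue_in b D t -> continue_in (Estar_payoff F b) D t.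
Proof.
  intros HF Hb.
  assert (Hid : continue_in (fun v => v) D t).
  { intros eps Heps. exists eps. split; [exact Heps | intros x [_ Hx]; exact Hx]. }
  assert (Hk : continue_in (fun v => F (b v + v)) D t).
  { apply (continue_in_comp F (fun v => b v + v)); [| apply HF].
    exact (limit_plus _ _ _ _ _ _ Hb Hid). }
  exact (limit_minus _ _ _ _ _ _ Hid (limit_mul _ _ _ _ _ _ Hk Hb)).
Qed.

Lemma derivable_pt_lim_Estar_payoff (F f b : R -> R) t :
  derivable_pt_lim b t (1 / (f (b t + t) * b t + F (b t + t)) - 1) ->
  derivable_pt_lim F (b t + t) (f (b t + t)) ->
  f (b t + t) * b t + F (b t + t) <> 0 ->
  derivable_pt_lim (Estar_payoff F b) t (F (b t + t)).
Proof.
  intros Hb HF Hnz.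
  set (db := 1 / (f (b t + t) * b t + F (b t + t)) - 1) in Hb.
  assert (Hk : derivable_pt_lim (fun v => b v + v) t (db + 1))
    by exact (derivable_pt_lim_plus _ _ _ _ _ Hb (derivable_pt_lim_id t)).
  assert (HFk := derivable_pt_lim_comp _ _ _ _ _ Hk HF).
  assert (HV := derivable_pt_lim_minus _ _ _ _ _ (derivable_pt_lim_id t)
                  (derivable_pt_lim_mult _ _ _ _ _ HFk Hb)).
  (* The ODE for [b] is exactly what collapses the derivative to [F (b t + t)]. *)
  replace (F (b t + t)) with (1 - (f (b t + t) * (db + 1) * b t + F (b t + t) * db)).
  - exact HV.
  - unfold db. field. exact Hnz.
Qed.

(** * Separating equilibria *)

(* The payoff of type [v] proposing [(b, r)] to a bidder 2 sure that [v1 = w >= v]: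
   she takes the bribe iff [v2 <= b + min r w], otherwise takes the request iff
   [r <= w], and otherwise rejects with [v2 > w >= v], leaving bidder 1 nothing. *)
Definition bribe_cutoff (b r w : R) : R := b + Rmin r w.

Definition request_payoff (r w : R) : R := if Rle_dec r w then r else 0.

Definition mimic_payoff (F : R -> R) (v b r w : R) : R :=
  (v - b) * F (bribe_cutoff b r w) + request_payoff r w * (1 - F (bribe_cutoff b r w)).

Lemma reject_payoff_point_cdf lo1 w v2 :
  lo1 <= w -> reject_payoff lo1 (point_cdf w) v2 = Rmax 0 (v2 - w).
Proof.
  intros Hw. unfold reject_payoff. destruct (Rle_dec lo1 v2) as [Hv2 | Hv2].
  2: { rewrite Rmax_left by lra. reflexivity. }
  apply Defs_RInt_unique.
  assert (Hzero : forall x y, x <= y -> y <= w -> is_RInt (point_cdf w) x y 0).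
  { intros x y Hxy Hyw.
    replace 0 with (scal (y - x) 0) by (unfold scal; simpl; unfold mult; simpl; ring).
    apply (@is_RInt_ext R_NormedModule) with (fun _ => 0);
      [| apply (@is_RInt_const R_NormedModule)].
    intros z Hz. rewrite Rmin_left, Rmax_right in Hz by lra.
    unfold point_cdf. destruct Rle_dec; lra. }
  destruct (Rle_dec v2 w) as [Hle | Hgt].
  - rewrite Rmax_left by lra. apply Hzero; lra.
  - rewrite Rmax_right by lra.
    replace (v2 - w) with (plus 0 (scal (v2 - w) 1))
      by (unfold plus, scal; simpl; unfold mult; simpl; ring).
    apply (@is_RInt_Chasles R_NormedModule) with w; [apply Hzero; lra |].
    apply (@is_RInt_ext R_NormedModule) with (fun _ => 1);
      [| apply (@is_RInt_const R_NormedModule)].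
    intros z Hz. rewrite Rmin_left, Rmax_right in Hz by lra.
    unfold point_cdf. destruct Rle_dec; lra.
Qed.

Lemma interim1_point_cdf lo1 lo2 hi2 F2 f2 v b r w :
  lo2 < hi2 -> has_density lo2 hi2 F2 f2 -> lo1 <= w -> v <= w -> 0 <= b ->
  interim1 lo1 lo2 hi2 f2 v b r (point_cdf w) = mimic_payoff F2 v b r w.
Proof.
  intros H2 HF2 Hw Hvw Hb. unfold interim1.
  transitivity (Defs.RInt (fun x => f2 x *
    (if Rle_dec x (bribe_cutoff b r w) then v - b else request_payoff r w)) lo2 hi2).
  - f_equal. apply functional_extensionality. intros x.
    rewrite reject_payoff_point_cdf by lra.
    unfold resp, u1, bribe_cutoff, request_payoff, Rmin, Rmax.
    repeat destruct Rle_dec; try lra; ring.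
  - apply Defs_RInt_unique, is_RInt_density_step; assumption.
Qed.

Section MimicPayoff.
Variable F : R -> R.
Hypothesis HF01 : forall x, 0 <= F x <= 1.

Lemma mimic_payoff_le_type v b r : 0 <= v -> 0 <= b -> mimic_payoff F v b r v <= v.
Proof.
  intros Hv Hb. pose proof (HF01 (bribe_cutoff b r v)).
  unfold mimic_payoff, request_payoff. destruct Rle_dec; nra.
Qed.

Lemma mimic_payoff_le_cutoff v b r : 0 <= v ->
  mimic_payoff F v b r v <= v - (bribe_cutoff b r v - v) * F (bribe_cutoff b r v).
Proof.
  intros Hv. pose proof (HF01 (bribe_cutoff b r v)).
  unfold mimic_payoff, request_payoff, bribe_cutoff, Rmin in *. destruct Rle_dec; nra.
Qed.

End MimicPayoff.

Lemma mimic_payoff_type_shift F w b r t :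
  mimic_payoff F w b r t = mimic_payoff F t b r t - (t - w) * F (bribe_cutoff b r t).
Proof. unfold mimic_payoff. ring. Qed.

Section Equilibrium.
Variables (lo1 hi1 lo2 hi2 : R) (F2 f2 beta gamma : R -> R) (mu : R -> R -> R -> R).
Hypotheses (Hlo1 : 0 <= lo1) (H2 : lo2 < hi2) (HF2 : has_density lo2 hi2 F2 f2)
  (Heq : separating_wPBE lo1 hi1 lo2 hi2 f2 beta gamma mu).

Local Notation U := (eq_payoff lo1 lo2 hi2 f2 beta gamma mu).
Local Notation K v := (bribe_cutoff (beta v) (gamma v) v).

Lemma interim1_on_path v t : lo1 <= v -> v <= t -> t <= hi1 ->
  interim1 lo1 lo2 hi2 f2 v (beta t) (gamma t) (mu (beta t) (gamma t))
  = mimic_payoff F2 v (beta t) (gamma t) t.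
Proof.
  intros Hv Hvt Ht. destruct Heq as (Hpos & _ & _ & Hpoint & _).
  replace (mu (beta t) (gamma t)) with (point_cdf t)
    by (apply functional_extensionality; intros x; rewrite Hpoint; auto; lra).
  apply interim1_point_cdf; try lra; try assumption. apply Hpos. lra.
Qed.

Lemma eq_payoff_mimic v : lo1 <= v <= hi1 -> U v = mimic_payoff F2 v (beta v) (gamma v) v.
Proof. intros Hv. apply interim1_on_path; lra. Qed.

Lemma eq_payoff_le_type v : lo1 <= v <= hi1 -> U v <= v.
Proof.
  intros Hv. rewrite eq_payoff_mimic by exact Hv.
  destruct Heq as (Hpos & _). apply mimic_payoff_le_type;
    [exact (F_bounds lo2 hi2 F2 f2 H2 HF2) | lra | apply Hpos, Hv].
Qed.

Lemma eq_payoff_le_cutoff v : lo1 <= v <= hi1 -> U v <= v - (K v - v) * F2 (K v).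
Proof.
  intros Hv. rewrite eq_payoff_mimic by exact Hv.
  apply mimic_payoff_le_cutoff; [exact (F_bounds lo2 hi2 F2 f2 H2 HF2) | lra].
Qed.

Lemma eq_payoff_incentive w t : lo1 <= w -> w <= t -> t <= hi1 ->
  U t - U w <= (t - w) * F2 (K t).
Proof.
  intros Hw Hwt Ht. destruct Heq as (Hpos & _ & _ & _ & Hic).
  destruct (Hpos t ltac:(lra)) as [Hb Hr].
  pose proof (Hic w ltac:(lra) (beta t) (gamma t) Hb Hr) as Hdev.
  rewrite interim1_on_path, mimic_payoff_type_shift in Hdev by lra.
  rewrite (eq_payoff_mimic t) by lra. unfold eq_payoff. lra.
Qed.

Lemma eq_payoff_sub_le w t : lo1 <= w -> w <= t -> t <= hi1 -> U t - U w <= t - w.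
Proof.
  intros Hw Hwt Ht. pose proof (eq_payoff_incentive w t Hw Hwt Ht).
  pose proof (F_bounds lo2 hi2 F2 f2 H2 HF2 (K t)). nra.
Qed.

Lemma eq_payoff_increment_le_Estar_slope bstar t :
  lo1 <= t <= hi1 ->
  derivable_pt_lim bstar t (1 / (f2 (bstar t + t) * bstar t + F2 (bstar t + t)) - 1) ->
  bstar t + t <> hi2 ->
  Estar_payoff F2 bstar t < U t ->
  exists d, derivable_pt_lim (Estar_payoff F2 bstar) t d /\
    forall w, lo1 <= w <= t -> U t - U w <= (t - w) * d.
Proof.
  intros Ht Hder Hhi Hlt. unfold Estar_payoff in Hlt.
  pose proof (F_bounds lo2 hi2 F2 f2 H2 HF2) as HF01.
  pose proof (eq_payoff_le_type t Ht).
  assert (Hmass : 0 < F2 (bstar t + t) * bstar t) by lra.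
  assert (Hb : 0 < bstar t) by (pose proof (HF01 (bstar t + t)); nra).
  assert (HF : 0 < F2 (bstar t + t)) by (pose proof (HF01 (bstar t + t)); nra).
  assert (HK : F2 (K t) <= F2 (bstar t + t)).
  { apply (F_le lo2 hi2 F2 f2 H2 HF2), Rlt_le.
    apply (lt_of_weighted_cdf_lt F2 t); try lra.
    - exact (F_le lo2 hi2 F2 f2 H2 HF2).
    - intros x. apply HF01.
    - pose proof (eq_payoff_le_cutoff t Ht).
      replace (bstar t + t - t) with (bstar t) by ring. lra. }
  exists (F2 (bstar t + t)). split.
  - apply (derivable_pt_lim_Estar_payoff F2 f2); [exact Hder | |].
    + apply (F_derivable lo2 hi2 F2 f2 H2 HF2); [| exact Hhi].
      intros Hlo. destruct HF2 as (Flo & _). rewrite Hlo, Flo in HF; lra.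
    + pose proof (f_ge0 lo2 hi2 F2 f2 HF2 (bstar t + t)). nra.
  - intros w Hw. pose proof (eq_payoff_incentive w t ltac:(lra) ltac:(lra) ltac:(lra)).
    assert ((t - w) * F2 (K t) <= (t - w) * F2 (bstar t + t)) by (apply Rmult_le_compat_l; lra).
    lra.
Qed.

End Equilibrium.

Theorem proposition4
  (lo1 hi1 lo2 hi2 : R) (F1 f1 F2 f2 : R -> R)
  (Hlo1 : 0 <= lo1) (H1 : lo1 < hi1) (Hlo2 : 0 <= lo2) (H2 : lo2 < hi2)
  (H12 : lo1 < hi2)
  (HF1 : has_density lo1 hi1 F1 f1) (HF2 : has_density lo2 hi2 F2 f2)
  (bstar : R -> R) (Hbstar : Estar_bribe lo1 hi1 hi2 F2 f2 bstar)
  (beta gamma : R -> R) (mu : R -> R -> (R -> R))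
  (Heq : separating_wPBE lo1 hi1 lo2 hi2 f2 beta gamma mu) :
  forall v1, lo1 <= v1 <= hi1 ->
    eq_payoff lo1 lo2 hi2 f2 beta gamma mu v1 <= Estar_payoff F2 bstar v1.
Proof.
  intros v1 Hv1.
  destruct Hbstar as (vh & Hvh & Hb0 & Hbcont & Hbder & Hhit & Hbconst).
  pose proof HF2 as (_ & F2hi & F2cont & _).
  pose proof (eq_payoff_sub_le lo1 hi1 lo2 hi2 F2 f2 beta gamma mu H2 HF2 Heq) as Hsub.
  assert (Hbefore : forall x, lo1 <= x <= vh ->
            eq_payoff lo1 lo2 hi2 f2 beta gamma mu x <= Estar_payoff F2 bstar x).
  { apply le_on_interval.
    - intros t Ht. apply continue_in_Estar_payoff; [exact F2cont | apply Hbcont, Ht].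
    - intros w t Hw Hwt Ht. apply Hsub; lra.
    - intros t Ht Hlt.
      apply (eq_payoff_increment_le_Estar_slope lo1 hi1 lo2 hi2 F2 f2 beta gamma mu);
        try assumption; [lra | apply Hbder, Ht |].
      destruct Hhit as [[_ Hne] | [_ Hne]]; apply Hne; lra.
    - unfold Estar_payoff. rewrite Hb0.
      pose proof (eq_payoff_le_type lo1 hi1 lo2 hi2 F2 f2 beta gamma mu Hlo1 H2 HF2 Heq lo1). lra. }
  destruct (Rle_lt_dec v1 vh) as [Hle | Hgt]; [apply Hbefore; lra |].
  destruct Hhit as [[Hhit _] | [Hvh_hi _]]; [| lra].
  pose proof (Hsub vh v1 ltac:(lra) ltac:(lra) ltac:(lra)).
  pose proof (Hbefore vh ltac:(lra)).
  unfold Estar_payoff in *. rewrite Hbconst, F2hi by lra. rewrite Hhit, F2hi in * by lra. lra.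
Qed.
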